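(* Let $R$ be a finite local Frobenius ring which is not a field, of odd characteristic, in which $3$ is a unit, and fix a primitive additive character $\psi$ of $R$. Then for every non-primitive multiplicative character $\tau$ of $R$, $$\sum_{a\in R^\times}K_\tau(a)^3=0.$$
   Context: All rings are finite and commutative with identity; $R^\times$ is the unit group; $M$ is the maximal ideal of the local ring $R$. An additive character $(R,+)\to\mathbb{C}^*$ is primitive if the only ideal on which it is identically $1$ is $(0)$; $R$ is Frobenius if such a character exists. A multiplicative character is a homomorphism $R^\times\to\mathbb{C}^*$; its conductor is $R$ if it is trivial, and otherwise the largest ideal $I\subseteq M$ such that it is identically $1$ on $1+I$; it is primitive if its conductor is $(0)$. $K_\tau(a)=\sum_{u\in R^\times}\tau(u)\psi(u+au^{-1})$. Odd characteristic means $R/M$ has odd characteristic. *)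

From HB Require Import structures.
From mathcomp Require Import all_boot all_order all_algebra all_fingroup.
From mathcomp Require Import algC.
Set Implicit Arguments. Unset Strict Implicit. Unset Printing Implicit Defensive.
Import Order.TTheory GRing.Theory Num.Theory.
Local Open Scope ring_scope.

Section Defs.
Variable R : finComUnitRingType.

Definition is_ideal (I : {set R}) : Prop :=
  [/\ (0 : R) \in I,
      (forall x y, x \in I -> y \in I -> x - y \in I) &
      (forall r x, x \in I -> r * x \in I)].

Definition maximal_ideal (I : {set R}) : Prop :=
  [/\ is_ideal I, (1 : R) \notin I &
      forall J : {set R}, is_ideal J -> I \subset J -> J = I \/ (1 : R) \in J].

Definition local_with_max (M : {set R}) : Prop :=
  forall I : {set R}, maximal_ideal I <-> I = M.

(* p is the characteristic of the residue field R/M. *)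
Definition residue_char (M : {set R}) (p : nat) : Prop :=
  prime p /\ (p%:R : R) \in M.

Definition additive_char (psi : R -> algC) : Prop :=
  (forall x, psi x != 0) /\ (forall x y, psi (x + y) = psi x * psi y).

Definition primitive_additive_char (psi : R -> algC) : Prop :=
  additive_char psi /\
  forall I : {set R}, is_ideal I -> (forall x, x \in I -> psi x = 1) -> I = [set 0].

Definition mult_char (tau : {unit R} -> algC) : Prop :=
  (forall u, tau u != 0) /\ (forall u v, tau (u * v)%g = tau u * tau v).

Definition trivial_on_1plus (tau : {unit R} -> algC) (I : {set R}) : Prop :=
  forall u : {unit R}, val u - 1 \in I -> tau u = 1.

Definition is_conductor (M : {set R}) (tau : {unit R} -> algC) (I : {set R}) : Prop :=
  ((forall u, tau u = 1) -> I = [set: R]) /\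
  (~ (forall u, tau u = 1) -> [/\ is_ideal I, I \subset M, trivial_on_1plus tau I &
         forall J : {set R}, is_ideal J -> J \subset M -> trivial_on_1plus tau J ->
           J \subset I]).

Definition primitive_mult_char (M : {set R}) (tau : {unit R} -> algC) : Prop :=
  is_conductor M tau [set 0].

Definition Kloosterman (psi : R -> algC) (tau : {unit R} -> algC) (a : R) : algC :=
  \sum_(u : {unit R}) tau u * psi (val u + a * (val u)^-1).

End Defs.

From HB Require Import structures.
From mathcomp Require Import all_boot all_order all_algebra all_fingroup.
From mathcomp Require Import algC ring.
From Stdlib Require Import Classical.
Set Implicit Arguments. Unset Strict Implicit. Unset Printing Implicit Defensive.
Import GRing.Theory Num.Theory.
Local Open Scope ring_scope.

(* Since tau is not primitive, it is trivial on 1 + J for a nonzero ideal J inside the maximal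
   ideal M, which is nilpotent; hence J contains some x <> 0 with x^2 = 0.  Averaging K_tau(a)
   over the substitutions u |-> u (1 + x r) and using the orthogonality of the primitive
   character psi, only the terms with x (u - a/u) = 0 survive.  After expanding the cube, each
   triple (u, v, w) contributes a sum over a that the shift a |-> a + x r multiplies by
   psi (r x s), where s = 1/u + 1/v + 1/w.  A surviving term forces x u^2 = x v^2 = x w^2 = x a;
   as the annihilator of x lies in M, v = +-u and w = +-u modulo M, so s is a unit (3 being
   one), hence x s <> 0 and the sum vanishes. *)

Lemma nilpotent_sqr0 (R : nzRingType) (y : R) n : y ^+ n = 0 -> y != 0 ->
  exists k, y ^+ k.+1 != 0 /\ y ^+ k.+1 * y ^+ k.+1 = 0.
Proof.
move=> yn0 y0; have ex_n : exists n, y ^+ n == 0 by exists n; apply/eqP.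
case: (ex_minnP ex_n) => -[|[|k]] /eqP ym min_m.
- by move/eqP: ym; rewrite expr0 oner_eq0.
- by move: y0; rewrite -[y]expr1 ym eqxx.
exists k; split; last by rewrite -exprD -addSnnS exprD ym mul0r.
by apply/negP => /min_m; rewrite ltnn.
Qed.

Lemma unit1D_sqr0 (R : comUnitRingType) (z : R) : z * z = 0 -> 1 + z \is a GRing.unit.
Proof.
move=> zz0; apply/unitrPr; exists (1 - z).
by transitivity (1 - z * z); [ring | rewrite zz0 subr0].
Qed.

Lemma inv1D_sqr0 (R : comUnitRingType) (z : R) : z * z = 0 -> (1 + z)^-1 = 1 - z.
Proof.
move=> zz0; apply: mulr1_eq.
by transitivity (1 - z * z); [ring | rewrite zz0 subr0].
Qed.

Lemma sum_expr3_exchange (R : comNzRingType) (I J : finType) (G : I -> J -> R) :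
  \sum_i (\sum_j G i j) ^+ 3 =
  \sum_u \sum_v \sum_w \sum_i G i u * G i v * G i w.
Proof.
have -> : \sum_i (\sum_j G i j) ^+ 3 = \sum_i \sum_u \sum_v \sum_w G i u * G i v * G i w.
  apply: eq_bigr => i _; rewrite !exprS expr0 mulr1 !mulr_suml; apply: eq_bigr => u _.
  rewrite mulr_sumr; apply: eq_bigr => v _.
  by rewrite !mulr_sumr; apply: eq_bigr => w _; rewrite mulrA.
rewrite exchange_big; apply: eq_bigr => u _.
by rewrite exchange_big; apply: eq_bigr => v _; rewrite exchange_big.
Qed.

Section Ideals.
Variable R : finComUnitRingType.

Definition idealb (I : {set R}) : bool :=
  [&& (0 : R) \in I, [forall x, forall y, (x \in I) ==> (y \in I) ==> (x - y \in I)]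
    & [forall r, forall x, (x \in I) ==> (r * x \in I)]].

Lemma idealP (I : {set R}) : reflect (is_ideal I) (idealb I).
Proof.
apply: (iffP and3P) => [[I0 /forallP IB /forallP IM] | [I0 IB IM]].
  split=> // [x y | r x]; first by move: (IB x) => /forallP/(_ y)/implyP H /H/implyP.
  by move: (IM r) => /forallP/(_ x)/implyP.
split=> //; apply/forallP => x; apply/forallP => y; apply/implyP => ?.
  by apply/implyP; apply: IB.
exact: IM.
Qed.

Lemma is_ideal0 : is_ideal [set 0 : R].
Proof.
split=> [|x y|r x]; rewrite ?inE //; first by move=> /eqP-> /eqP->; rewrite subr0.
by move=> /eqP->; rewrite mulr0.
Qed.

Definition principal_ideal (y : R) : {set R} := [set r * y | r : R].

Lemma principal_idealP y : is_ideal (principal_ideal y).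
Proof.
split=> [|_ _ /imsetP[r _ ->] /imsetP[s _ ->] | t _ /imsetP[r _ ->]]; apply/imsetP.
- by exists 0; rewrite ?mul0r.
- by exists (r - s); rewrite ?mulrBl.
- by exists (t * r); rewrite ?mulrA.
Qed.

Lemma mem_principal_ideal y r : r * y \in principal_ideal y.
Proof. exact: imset_f. Qed.

Variables (I : {set R}) (I_ideal : is_ideal I).

Lemma idealMl r y : y \in I -> r * y \in I.
Proof. by case: I_ideal => _ _; apply. Qed.

Lemma idealMr y r : y \in I -> y * r \in I.
Proof. by rewrite mulrC; apply: idealMl. Qed.

Lemma idealN y : y \in I -> - y \in I.
Proof. by case: I_ideal => I0 IB _ yI; rewrite -sub0r; apply: IB. Qed.

Lemma idealD y z : y \in I -> z \in I -> y + z \in I.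
Proof. by case: I_ideal => _ IB _ yI /idealN zI; rewrite -[z]opprK; apply: IB. Qed.

End Ideals.

Section Characters.
Variable R : finComUnitRingType.

Lemma additive_char0 (psi : R -> algC) : additive_char psi -> psi 0 = 1.
Proof.
case=> psi_neq0 psiD; apply: (mulfI (psi_neq0 0)).
by rewrite mulr1 -psiD addr0.
Qed.

Lemma primitive_char_mul_eq0 (psi : R -> algC) : primitive_additive_char psi ->
  forall c, (forall r, psi (r * c) = 1) -> c = 0.
Proof.
case=> _ psi_prim c psi_c.
have : c \in principal_ideal c by rewrite -{1}[c]mul1r mem_principal_ideal.
by rewrite (psi_prim _ (principal_idealP c)) ?inE => [/eqP | _ /imsetP[r _ ->]].
Qed.

Lemma sum_primitive_char (psi : R -> algC) : primitive_additive_char psi ->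
  forall c, \sum_(r : R) psi (r * c) = if c == 0 then #|R|%:R else 0.
Proof.
move=> psi_prim c; have [-> | c0] := eqVneq c 0.
  by under eq_bigr do rewrite mulr0 (additive_char0 psi_prim.1); rewrite sumr_const.
have /existsP[r0 psi_r0] : [exists r0, psi (r0 * c) != 1].
  apply: contraNT c0 => /existsPn psi_c; apply/eqP/(primitive_char_mul_eq0 psi_prim) => r.
  exact/eqP/negPn/psi_c.
set S := \sum_r _.
have S_twist : S = S * psi (r0 * c).
  rewrite {1}/S (reindex_inj (addrI r0)) /= mulr_suml; apply: eq_bigr => r _.
  by rewrite mulrDl psi_prim.1.2 mulrC.
have : S * (1 - psi (r0 * c)) = 0 by rewrite mulrBr mulr1 -S_twist subrr.
by move/eqP; rewrite mulf_eq0 subr_eq0 [1 == _]eq_sym (negbTE psi_r0) orbF => /eqP.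
Qed.

Lemma mult_char1 (tau : {unit R} -> algC) : mult_char tau -> tau 1%g = 1.
Proof.
case=> tau_neq0 tauM; apply: (mulfI (tau_neq0 1%g)).
by rewrite mulr1 -tauM mulg1.
Qed.

End Characters.

Section LocalRing.
Variables (R : finComUnitRingType) (M : {set R}).
Hypothesis M_local : local_with_max M.

Lemma local_maximal : maximal_ideal M.
Proof. exact/M_local. Qed.

Lemma local_ideal : is_ideal M.
Proof. by case: local_maximal. Qed.

Lemma local_memE y : (y \in M) = (y \isn't a GRing.unit).
Proof.
have [[_ _ MM] M1 _] := local_maximal.
apply/idP/idP => [yM | yN].
  by apply: contra M1 => yU; rewrite -(mulVr yU); apply: MM.
(* A proper ideal containing yR of maximal size is a maximal ideal, hence M. *)
pose P (J : {set R}) := [&& idealb J, (1 : R) \notin J & principal_ideal y \subset J].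
have P_y : P (principal_ideal y).
  rewrite /P subxx andbT; apply/andP; split; first exact/idealP/principal_idealP.
  apply/imsetP => -[r _ /esym r_y]; move/negP: yN; apply; apply/unitrPr.
  by exists r; rewrite mulrC.
have [J /and3P[/idealP J_ideal J1 yJ] J_max] := @arg_maxnP _ _ P (fun J : {set R} => #|J|) P_y.
have /M_local <- : maximal_ideal J.
  split=> // K K_ideal JK; have [|K1] := boolP (1 \in K); [by right | left].
  apply/eqP; rewrite eq_sym eqEcard JK; apply: J_max.
  by apply/and3P; split; [exact/idealP | exact: K1 | exact: subset_trans JK].
by apply: (subsetP yJ); rewrite -{1}[y]mul1r mem_principal_ideal.
Qed.

Lemma local_unitD a m : a \is a GRing.unit -> m \in M -> a + m \is a GRing.unit.
Proof.
move=> aU mM; apply: contraT; rewrite -local_memE => amM.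
have : a \in M by rewrite -[a](addrK m) (idealD local_ideal) ?(idealN local_ideal).
by rewrite local_memE aU.
Qed.

Lemma local_ann x y : x != 0 -> x * y = 0 -> y \in M.
Proof.
move=> x0 xy0; rewrite local_memE; apply: contra x0 => yU.
by rewrite -(mulrK yU x) xy0 mul0r.
Qed.

Lemma local_nilpotent y : y \in M -> exists n, y ^+ n = 0.
Proof.
move=> yM; have /injectivePn[i [j ne_ij eq_ij]] : ~~ injectiveb (fun i : 'I_#|R|.+1 => y ^+ i).
  by apply/injectiveP => /leq_card; rewrite card_ord ltnn.
wlog lt_ij : i j ne_ij eq_ij / (i < j)%N.
  move=> wlog_ij; have [/wlog_ij|/wlog_ij|/val_inj eq_ij'] := ltngtP i j.
  - exact.
  - by apply; rewrite 1?eq_sym.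
  - by rewrite eq_ij' eqxx in ne_ij.
exists i; have yjiM : y ^+ (j - i) \in M.
  by rewrite -(subnSK lt_ij) exprSr (idealMl local_ideal).
have uU := local_unitD (unitr1 R) (idealN local_ideal yjiM).
apply: (mulIr uU); rewrite mul0r mulrBr mulr1 -exprD subnKC ?(ltnW lt_ij) //=.
by rewrite eq_ij subrr.
Qed.

Lemma local_sum_units_shift (V : nmodType) (F : R -> V) m : m \in M ->
  \sum_(a : {unit R}) F (val a + m) = \sum_(a : {unit R}) F (val a).
Proof.
move=> mM; pose sh (a : {unit R}) : {unit R} := Sub (val a + m) (local_unitD (valP a) mM).
have sh_inj : injective sh by move=> a b /(congr1 val); rewrite !SubK => /addIr/val_inj.
by rewrite [RHS](reindex_inj sh_inj); apply: eq_bigr => a _; rewrite SubK.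
Qed.

Lemma local_sqr_sign (x u v : R) : x != 0 -> v \is a GRing.unit -> x * (u * u) = x * (v * v) ->
  (u / v - 1 \in M) || (u / v + 1 \in M).
Proof.
move=> x0 vU eq_uv; have : (u - v) * (u + v) \in M.
  apply: (local_ann x0); rewrite (_ : (u - v) * (u + v) = u * u - v * v); last by ring.
  by rewrite mulrBr eq_uv subrr.
rewrite !local_memE unitrM negb_and -!local_memE => /orP[uvM | uvM]; apply/orP; [left | right].
- by rewrite -(divrr vU) -mulrBl (idealMr local_ideal).
- by rewrite -(divrr vU) -mulrDl (idealMr local_ideal).
Qed.

Lemma local_unit_1DD (p q : R) : (3%:R : R) \is a GRing.unit ->
  (p - 1 \in M) || (p + 1 \in M) -> (q - 1 \in M) || (q + 1 \in M) ->
  1 + p + q \is a GRing.unit.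
Proof.
move=> unit3 p_sign q_sign.
have near e f c : 1 + e + f = c -> c \is a GRing.unit -> p - e \in M -> q - f \in M ->
    1 + p + q \is a GRing.unit.
  move=> <- cU peM qfM; rewrite (_ : 1 + p + q = 1 + e + f + ((p - e) + (q - f))); last by ring.
  by apply: local_unitD; rewrite // (idealD local_ideal).
have unitN1 := unitrN1 R; have unit1 := unitr1 R.
case/orP: p_sign => pM; case/orP: q_sign => qM.
- by apply: (near 1 1 3%:R) => //; ring.
- by apply: (near 1 (-1) 1); rewrite ?opprK //; ring.
- by apply: (near (-1) 1 1); rewrite ?opprK //; ring.
- by apply: (near (-1) (-1) (-1)); rewrite ?opprK //; ring.
Qed.

Lemma local_unit_sum_inv3 (x a u v w : R) : (3%:R : R) \is a GRing.unit -> x != 0 ->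
  u \is a GRing.unit -> v \is a GRing.unit -> w \is a GRing.unit ->
  x * (u * u) = x * a -> x * (v * v) = x * a -> x * (w * w) = x * a ->
  u^-1 + v^-1 + w^-1 \is a GRing.unit.
Proof.
move=> unit3 x0 uU vU wU xu xv xw.
suff : u * (u^-1 + v^-1 + w^-1) \is a GRing.unit by rewrite unitrM => /andP[].
rewrite !mulrDr mulrV //; apply: local_unit_1DD => //; apply: (local_sqr_sign x0) => //.
  by rewrite xu xv.
by rewrite xu xw.
Qed.

Lemma local_nonprimitive_conductor (tau : {unit R} -> algC) :
  ~ (forall y : R, y != 0 -> y \is a GRing.unit) -> mult_char tau ->
  ~ primitive_mult_char M tau ->
  exists J : {set R}, exists2 y, y \in J &
    [/\ y != 0, is_ideal J, J \subset M & trivial_on_1plus tau J].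
Proof.
move=> not_field tau_char not_prim.
have [/forallP tau1 | /forallPn[u0 tau_u0]] := boolP [forall u, tau u == 1].
  have /existsP[y /andP[y0 yN]] : [exists y : R, (y != 0) && (y \isn't a GRing.unit)].
    apply: contraT => /existsPn no_y; exfalso; apply: not_field => y y0.
    by move: (no_y y); rewrite y0 negbK.
  exists M, y; first by rewrite local_memE.
  by split=> //; [exact: local_ideal | move=> u _; exact/eqP].
apply: NNPP => no_J; apply: not_prim; split=> [tau_triv | _].
  by rewrite tau_triv eqxx in tau_u0.
split.
- exact: is_ideal0.
- by apply/subsetP => z; rewrite inE => /eqP->; case: local_ideal.
- move=> u; rewrite inE subr_eq0 => /eqP u1.
  by rewrite (_ : u = 1%g) ?mult_char1 //; exact: val_inj.
- move=> J J_ideal JM J_triv; apply/subsetP => y yJ; rewrite inE.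
  by apply/negPn/negP => y0; apply: no_J; exists J, y.
Qed.

Lemma local_nonprimitive_sqr0 (tau : {unit R} -> algC) :
  ~ (forall y : R, y != 0 -> y \is a GRing.unit) -> mult_char tau ->
  ~ primitive_mult_char M tau ->
  exists x, [/\ x != 0, x * x = 0 & forall (c : {unit R}) r, val c = 1 + x * r -> tau c = 1].
Proof.
move=> not_field tau_char not_prim.
have [J [y yJ [y0 J_ideal JM J_triv]]] := local_nonprimitive_conductor not_field tau_char not_prim.
have [n yn0] := local_nilpotent (subsetP JM y yJ).
have [k [yk0 yk_sqr0]] := nilpotent_sqr0 yn0 y0.
exists (y ^+ k.+1); split=> // c r c_1D; apply: J_triv.
by rewrite c_1D addrC addKr (idealMr J_ideal) // exprSr (idealMl J_ideal).
Qed.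

End LocalRing.

Section KloostermanRestriction.
Variables (R : finComUnitRingType) (psi : R -> algC) (tau : {unit R} -> algC) (x : R).
Hypotheses (psi_prim : primitive_additive_char psi) (tau_char : mult_char tau).
Hypothesis xx0 : x * x = 0.
Hypothesis tau_1Dx : forall (c : {unit R}) r, val c = 1 + x * r -> tau c = 1.

Definition Kloosterman_term (a : R) (u : {unit R}) : algC :=
  if x * (val u - a * (val u)^-1) == 0 then tau u * psi (val u + a * (val u)^-1) else 0.

Lemma Kloosterman_twist a r : Kloosterman psi tau a =
  \sum_(u : {unit R}) tau u * psi (val u + a * (val u)^-1) *
                      psi (r * (x * (val u - a * (val u)^-1))).
Proof.
have xr0 : x * r * (x * r) = 0 by rewrite mulrACA xx0 mul0r.
pose c : {unit R} := Sub (1 + x * r) (unit1D_sqr0 xr0).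
rewrite /Kloosterman (reindex_inj (mulIg c)) /=; apply: eq_bigr => u _.
rewrite tau_char.2 (@tau_1Dx c r) ?SubK // mulr1 invrM ?(valP u) ?SubK ?unit1D_sqr0 //.
by rewrite inv1D_sqr0 // -mulrA -psi_prim.1.2; congr (_ * psi _); ring.
Qed.

Lemma Kloosterman_restrict a : Kloosterman psi tau a = \sum_(u : {unit R}) Kloosterman_term a u.
Proof.
have card0 : (#|R|%:R : algC) != 0 by rewrite pnatr_eq0 -lt0n; apply/card_gt0P; exists 0.
apply: (mulfI card0); transitivity (\sum_(r : R) Kloosterman psi tau a).
  by rewrite sumr_const mulr_natl.
under eq_bigr => r _ do rewrite (Kloosterman_twist a r).
rewrite exchange_big mulr_sumr; apply: eq_bigr => u _.
rewrite -mulr_sumr sum_primitive_char // /Kloosterman_term.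
by case: eqP => _; rewrite ?mulr0 // mulrC.
Qed.

Lemma Kloosterman_term_shift a r (z : {unit R}) :
  Kloosterman_term (a + x * r) z = Kloosterman_term a z * psi (r * (x * (val z)^-1)).
Proof.
rewrite /Kloosterman_term.
have -> : x * (val z - (a + x * r) * (val z)^-1) = x * (val z - a * (val z)^-1).
  transitivity (x * (val z - a * (val z)^-1) - x * x * (r * (val z)^-1)); first by ring.
  by rewrite xx0 mul0r subr0.
case: eqP => _; last by rewrite mul0r.
by rewrite -mulrA -psi_prim.1.2; congr (_ * psi _); ring.
Qed.

Lemma Kloosterman_term_neq0 a z : Kloosterman_term a z != 0 -> x * (val z * val z) = x * a.
Proof.
rewrite /Kloosterman_term; case: ifP => [/eqP cond _ | _]; last by rewrite eqxx.
apply/eqP; rewrite -subr_eq0 -mulrBr.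
have -> : val z * val z - a = (val z - a * (val z)^-1) * val z by rewrite mulrBl (mulrVK (valP z)).
by rewrite mulrA cond mul0r.
Qed.

Variable M : {set R}.
Hypotheses (M_local : local_with_max M) (unit3 : (3%:R : R) \is a GRing.unit) (x0 : x != 0).

Lemma sum_Kloosterman_term3 u v w :
  \sum_(a : {unit R})
    Kloosterman_term (val a) u * Kloosterman_term (val a) v * Kloosterman_term (val a) w = 0.
Proof.
pose F b := Kloosterman_term b u * Kloosterman_term b v * Kloosterman_term b w.
change (\sum_(a : {unit R}) F (val a) = 0); set I := \sum_a _.
set s := (val u)^-1 + (val v)^-1 + (val w)^-1.
have I_twist r : I = I * psi (r * (x * s)).
  have xrM : x * r \in M by apply/(idealMr (local_ideal M_local))/(local_ann M_local x0 xx0).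
  rewrite {1}/I -(local_sum_units_shift M_local F xrM) mulr_suml; apply: eq_bigr => a _.
  by rewrite /F !Kloosterman_term_shift /s !mulrDr !psi_prim.1.2; ring.
apply/eqP; apply: contraT => I0.
have /existsP[a] : [exists a : {unit R}, F (val a) != 0].
  apply: contraT => /existsPn zero_terms; move: I0; rewrite /I big1 ?eqxx // => a _.
  exact/eqP/negPn/zero_terms.
rewrite /F !mulf_eq0 !negb_or => /andP[/andP[tu tv] tw].
have sU : s \is a GRing.unit.
  exact: (local_unit_sum_inv3 M_local unit3 x0 (valP u) (valP v) (valP w)
           (Kloosterman_term_neq0 tu) (Kloosterman_term_neq0 tv) (Kloosterman_term_neq0 tw)).
have xs0 : x * s = 0.
  by apply: (primitive_char_mul_eq0 psi_prim) => r; apply: (mulfI I0); rewrite mulr1 -I_twist.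
by move: x0; rewrite -(mulrK sU x) xs0 mul0r eqxx.
Qed.

End KloostermanRestriction.

Theorem mainTheorem4 (R : finComUnitRingType) (M : {set R})
  (psi : R -> algC) (tau : {unit R} -> algC) :
  local_with_max M ->
  ~ (forall x : R, x != 0 -> x \is a GRing.unit) ->
  (exists p, residue_char M p /\ odd p) ->
  (3%:R : R) \is a GRing.unit ->
  primitive_additive_char psi ->
  mult_char tau ->
  ~ primitive_mult_char M tau ->
  \sum_(a : {unit R}) (Kloosterman psi tau (val a)) ^+ 3 = 0.
Proof.
move=> M_local not_field _ unit3 psi_prim tau_char not_prim.
have [x [x0 xx0 tau_1Dx]] := local_nonprimitive_sqr0 M_local not_field tau_char not_prim.
under eq_bigr do rewrite (Kloosterman_restrict psi_prim tau_char xx0 tau_1Dx).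
rewrite sum_expr3_exchange.
by do 3![apply: big1 => ? _]; exact: sum_Kloosterman_term3.
Qed.
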